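(* Let $C$ be a totally bounded subset of a metric space $(X,d)$ with II-modulus of total boundedness $\gamma$, $T:C\to C$ nonexpansive with $\mathrm{Fix}(T)\ne\emptyset$, $x\in C$, $x_n:=T^nx$, and assume $(x_n)$ has approximate fixed points with $\Phi$ an approximate fixed point bound. Then for all $k\in\mathbb{N}$ and $g:\mathbb{N}\to\mathbb{N}$: (i) there exists $N\le\Sigma_0(\gamma(4k+3))$ with $d(x_i,x_j)\le\frac1{k+1}$ for all $i,j\in[N,N+g(N)]$, where $\Sigma_0(0)=0$, $\Sigma_0(n+1)=\Phi\big((4k+4)g^M(\Sigma_0(n))\big)$; (ii) there exists $N\le\tilde\Sigma_0(\gamma(8k+7))$ with $d(x_i,x_j)\le\frac1{k+1}$ and $d(x_i,Tx_i)\le\frac1{k+1}$ for all $i,j\in[N,N+g(N)]$, where $\tilde\Sigma_0(0)=0$, $\tilde\Sigma_0(n+1)=\Phi\big(\max\{2k+1,(8k+8)g^M(\tilde\Sigma_0(n))\}\big)$.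
   Context: II-modulus of total boundedness for $C$: $\gamma:\mathbb{N}\to\mathbb{N}$ such that for every $k$ and every sequence $(y_n)$ in $C$ there are $0\le i<j\le\gamma(k)$ with $d(y_i,y_j)\le\frac1{k+1}$. Nonexpansive: $d(Tx,Ty)\le d(x,y)$. An approximate fixed point bound for $(x_n)$ is a nondecreasing $\Phi:\mathbb{N}\to\mathbb{N}$ such that for every $k$ there is $N\le\Phi(k)$ with $d(x_N,Tx_N)\le\frac1{k+1}$. $g^M(n):=\max\{g(i)\mid i\le n\}$. *)

From Stdlib Require Import Reals Lia Arith.
Open Scope R_scope.

Definition is_metric {X : Type} (d : X -> X -> R) : Prop :=
  (forall x y, 0 <= d x y) /\
  (forall x y, d x y = 0 <-> x = y) /\
  (forall x y, d x y = d y x) /\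
  (forall x y z, d x z <= d x y + d y z).

Definition II_modulus {X : Type} (d : X -> X -> R) (C : X -> Prop)
  (gamma : nat -> nat) : Prop :=
  forall (k : nat) (y : nat -> X), (forall n, C (y n)) ->
    exists i j, (i < j)%nat /\ (j <= gamma k)%nat /\ d (y i) (y j) <= 1 / (INR k + 1).

Definition maps_into {X : Type} (C : X -> Prop) (T : X -> X) : Prop :=
  forall x, C x -> C (T x).
Definition nonexpansive_on {X : Type} (d : X -> X -> R) (C : X -> Prop) (T : X -> X) : Prop :=
  forall x y, C x -> C y -> d (T x) (T y) <= d x y.

Definition picard {X : Type} (T : X -> X) (x : X) (n : nat) : X := Nat.iter n T x.

Definition nondecreasing (f : nat -> nat) : Prop := forall m n, (m <= n)%nat -> (f m <= f n)%nat.
Definition afp_bound {X : Type} (d : X -> X -> R) (T : X -> X) (xs : nat -> X)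
  (Phi : nat -> nat) : Prop :=
  nondecreasing Phi /\
  forall k : nat, exists N, (N <= Phi k)%nat /\ d (xs N) (T (xs N)) <= 1 / (INR k + 1).

Fixpoint gM (g : nat -> nat) (n : nat) : nat :=
  match n with
  | O => g O
  | S m => Nat.max (gM g m) (g (S m))
  end.

Fixpoint Sigma0 (Phi : nat -> nat) (k : nat) (g : nat -> nat) (n : nat) : nat :=
  match n with
  | O => O
  | S m => Phi ((4 * k + 4) * gM g (Sigma0 Phi k g m))%nat
  end.

Fixpoint Sigma0t (Phi : nat -> nat) (k : nat) (g : nat -> nat) (n : nat) : nat :=
  match n with
  | O => O
  | S m => Phi (Nat.max (2 * k + 1) ((8 * k + 8) * gM g (Sigma0t Phi k g m)))%nat
  end.

(* Pick the pair [i < j <= gamma c] given by the modulus of total boundedness along the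
   nondecreasing sequence [Sigma_0], and set [N := Sigma_0 i], [M := Sigma_0 j].  Then
   [x_N] and [x_M] are close, and [M >= Sigma_0 (i+1)] makes [x_M] an approximate fixed
   point of a precision adapted to the window length [g N].  Nonexpansivity transports the
   closeness of [x_N] and [x_M] along the orbits, so every [x_i] with [i] in the window
   [[N, N + g N]] is close to some [x_(M+a)], and the points [x_(M+a)] with [a <= g N]
   stay close to each other because their step size is at most that of [x_M]. *)

From Stdlib Require Import Reals Lia Arith Lra.
Open Scope R_scope.

Lemma gM_nondecreasing (g : nat -> nat) : nondecreasing (gM g).
Proof.
  intros m n Hmn; induction Hmn as [|n _ IH]; [lia|].
  simpl; lia.
Qed.

Lemma le_gM (g : nat -> nat) (n : nat) : (g n <= gM g n)%nat.
Proof. destruct n; simpl; lia. Qed.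

Lemma nondecreasing_orbit (F s : nat -> nat) :
  nondecreasing F -> s O = O -> (forall n, s (S n) = F (s n)) -> nondecreasing s.
Proof.
  intros HF Hs0 HsS.
  assert (Hstep : forall n, (s n <= s (S n))%nat).
  { induction n as [|n IH]; [rewrite Hs0; lia|].
    rewrite (HsS n), (HsS (S n)); apply HF, IH. }
  intros m n Hmn; induction Hmn as [|n _ IH]; [lia|].
  specialize (Hstep n); lia.
Qed.

Lemma Sigma0_nondecreasing (Phi : nat -> nat) (k : nat) (g : nat -> nat) :
  nondecreasing Phi -> nondecreasing (Sigma0 Phi k g).
Proof.
  intros HPhi.
  apply (nondecreasing_orbit (fun m => Phi ((4 * k + 4) * gM g m)%nat)); try reflexivity.
  intros m n Hmn; apply HPhi, Nat.mul_le_mono_l, gM_nondecreasing, Hmn.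
Qed.

Lemma Sigma0t_nondecreasing (Phi : nat -> nat) (k : nat) (g : nat -> nat) :
  nondecreasing Phi -> nondecreasing (Sigma0t Phi k g).
Proof.
  intros HPhi.
  apply (nondecreasing_orbit
           (fun m => Phi (Nat.max (2 * k + 1) ((8 * k + 8) * gM g m)))%nat);
    try reflexivity.
  intros m n Hmn.
  apply HPhi, Nat.max_le_compat_l, Nat.mul_le_mono_l, gM_nondecreasing, Hmn.
Qed.

Lemma INR_scale_succ (c k : nat) :
  (0 < c)%nat -> INR (c * k + (c - 1)) + 1 = INR c * (INR k + 1).
Proof.
  intros Hc.
  rewrite <- S_INR.
  replace (S (c * k + (c - 1))) with (c * k + c)%nat by lia.
  rewrite plus_INR, mult_INR; ring.
Qed.

Lemma mul_le_inv_of_le_inv (a G L e : R) :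
  0 < a -> 0 <= L <= G -> 0 <= e -> e <= 1 / (a * G + 1) -> L * e <= 1 / a.
Proof.
  intros Ha HLG He HeG.
  assert (HaG : 0 < a * G + 1) by nra.
  assert (Hprod : e * (a * G + 1) <= 1).
  { apply (Rmult_le_compat_r (a * G + 1)) in HeG; [|lra].
    replace (1 / (a * G + 1) * (a * G + 1)) with 1 in HeG by (field; lra).
    exact HeG. }
  apply (Rmult_le_reg_r a); [exact Ha|].
  replace (1 / a * a) with 1 by (field; lra).
  assert (L * (e * a) <= G * (e * a)) by (apply Rmult_le_compat_r; nra).
  nra.
Qed.

Lemma window_budget (c k G L : nat) (delta e : R) :
  (3 <= c)%nat -> (L <= G)%nat -> 0 <= e ->
  delta <= 1 / (INR (c * k + (c - 1)) + 1) ->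
  e <= 1 / (INR ((c * k + c) * G) + 1) ->
  2 * delta + INR L * e <= 1 / (INR k + 1).
Proof.
  intros Hc HLG He Hdelta HeG.
  set (K := INR k + 1).
  assert (HK : 0 < K) by (pose proof (pos_INR k); unfold K; lra).
  assert (Hc3 : 3 <= INR c) by (replace 3 with (INR 3) by (simpl; lra); apply le_INR, Hc).
  rewrite INR_scale_succ in Hdelta by lia.
  replace (INR ((c * k + c) * G)) with (INR c * K * INR G) in HeG
    by (unfold K; rewrite mult_INR, plus_INR, mult_INR; ring).
  assert (HLe : INR L * e <= 1 / (INR c * K)).
  { apply (mul_le_inv_of_le_inv _ (INR G)); [nra| |exact He|exact HeG].
    split; [apply pos_INR | apply le_INR, HLG]. }
  assert (Hthird : 3 * (1 / (INR c * K)) <= 1 / K).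
  { replace (3 * (1 / (INR c * K))) with (3 / INR c * (1 / K)) by (field; lra).
    assert (3 / INR c <= 1) by (apply (Rmult_le_reg_r (INR c)); [lra|]; field_simplify; lra).
    assert (0 < 1 / K) by (apply Rdiv_lt_0_compat; lra).
    nra. }
  fold K in Hdelta; lra.
Qed.

Lemma step_budget (c k : nat) (delta e : R) :
  (4 <= c)%nat ->
  delta <= 1 / (INR (c * k + (c - 1)) + 1) ->
  e <= 1 / (INR (2 * k + 1) + 1) ->
  2 * delta + e <= 1 / (INR k + 1).
Proof.
  intros Hc Hdelta He.
  set (K := INR k + 1).
  assert (HK : 0 < K) by (pose proof (pos_INR k); unfold K; lra).
  assert (Hc4 : 4 <= INR c) by (replace 4 with (INR 4) by (simpl; lra); apply le_INR, Hc).
  rewrite INR_scale_succ in Hdelta, He by lia.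
  replace (INR 2) with 2 in He by (simpl; lra).
  assert (Hquarter : 1 / (INR c * K) <= 1 / (4 * K)).
  { apply Rmult_le_compat_l; [lra|]. apply Rinv_le_contravar; nra. }
  replace (1 / K) with (2 * (1 / (4 * K)) + 1 / (2 * K)) by (field; lra).
  fold K in Hdelta, He; lra.
Qed.

Section PicardIterates.

Variables (X : Type) (d : X -> X -> R) (C : X -> Prop) (T : X -> X) (x : X).
Hypothesis Hd : is_metric d.
Hypothesis HTC : maps_into C T.
Hypothesis HTne : nonexpansive_on d C T.
Hypothesis Hx : C x.

Local Notation p := (picard T x).

Lemma dist_nonneg a b : 0 <= d a b.
Proof. apply Hd. Qed.

Lemma dist_refl a : d a a = 0.
Proof. apply Hd; reflexivity. Qed.

Lemma dist_sym a b : d a b = d b a.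
Proof. apply Hd. Qed.

Lemma dist_triangle a b c : d a c <= d a b + d b c.
Proof. apply Hd. Qed.

Lemma picard_succ n : p (S n) = T (p n).
Proof. reflexivity. Qed.

Lemma picard_in n : C (p n).
Proof. induction n as [|n IH]; [exact Hx|]. rewrite picard_succ; apply HTC, IH. Qed.

Lemma picard_dist_shift N M a : d (p (N + a)) (p (M + a)) <= d (p N) (p M).
Proof.
  induction a as [|a IH]; [rewrite !Nat.add_0_r; lra|].
  rewrite !Nat.add_succ_r, !picard_succ.
  eapply Rle_trans; [apply HTne; apply picard_in | exact IH].
Qed.

Lemma picard_step_antitone n m :
  (n <= m)%nat -> d (p m) (T (p m)) <= d (p n) (T (p n)).
Proof.
  intros Hnm; induction Hnm as [|m _ IH]; [lra|].
  eapply Rle_trans; [|exact IH].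
  rewrite picard_succ; apply HTne; [apply picard_in | apply HTC, picard_in].
Qed.

Lemma picard_dist_le_steps M t : d (p M) (p (M + t)) <= INR t * d (p M) (T (p M)).
Proof.
  induction t as [|t IH].
  - rewrite Nat.add_0_r, dist_refl; simpl; lra.
  - rewrite Nat.add_succ_r, S_INR, picard_succ.
    pose proof (dist_triangle (p M) (p (M + t)) (T (p (M + t)))).
    pose proof (picard_step_antitone M (M + t) ltac:(lia)).
    lra.
Qed.

Lemma picard_dist_window N M L i j :
  (N <= i <= N + L)%nat -> (N <= j <= N + L)%nat ->
  d (p i) (p j) <= 2 * d (p N) (p M) + INR L * d (p M) (T (p M)).
Proof.
  assert (Hordered : forall a b, (a <= b <= L)%nat ->
            d (p (N + a)) (p (N + b)) <= 2 * d (p N) (p M) + INR L * d (p M) (T (p M))).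
  { intros a b Hab.
    pose proof (picard_dist_shift N M a) as Hshift_a.
    pose proof (picard_dist_shift N M b) as Hshift_b; rewrite dist_sym in Hshift_b.
    pose proof (dist_triangle (p (N + a)) (p (M + a)) (p (N + b))).
    pose proof (dist_triangle (p (M + a)) (p (M + b)) (p (N + b))).
    pose proof (picard_dist_le_steps (M + a) (b - a)) as Hsteps.
    replace (M + a + (b - a))%nat with (M + b)%nat in Hsteps by lia.
    assert (Hmiddle : INR (b - a) * d (p (M + a)) (T (p (M + a)))
                      <= INR L * d (p M) (T (p M))).
    { apply Rmult_le_compat; [apply pos_INR | apply dist_nonneg | apply le_INR; lia |].
      apply picard_step_antitone; lia. }
    lra. }
  intros Hi Hj.
  replace i with (N + (i - N))%nat by lia; replace j with (N + (j - N))%nat by lia.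
  destruct (Nat.le_ge_cases (i - N) (j - N)).
  - apply Hordered; lia.
  - rewrite dist_sym; apply Hordered; lia.
Qed.

Lemma picard_step_window N M i :
  (N <= i)%nat -> d (p i) (T (p i)) <= 2 * d (p N) (p M) + d (p M) (T (p M)).
Proof.
  intros Hi; replace i with (N + (i - N))%nat by lia; set (a := (i - N)%nat).
  pose proof (picard_dist_shift N M a) as Hshift.
  pose proof (picard_dist_shift N M (S a)) as Hshift_succ.
  rewrite dist_sym, !Nat.add_succ_r, !picard_succ in Hshift_succ.
  pose proof (dist_triangle (p (N + a)) (p (M + a)) (T (p (N + a)))).
  pose proof (dist_triangle (p (M + a)) (T (p (M + a))) (T (p (N + a)))).
  pose proof (picard_step_antitone M (M + a) ltac:(lia)).
  lra.
Qed.

Variables (gamma Phi : nat -> nat).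
Hypothesis Hgamma : II_modulus d C gamma.
Hypothesis HPhi : afp_bound d T p Phi.

Lemma afp_bound_tail m n : (Phi m <= n)%nat -> d (p n) (T (p n)) <= 1 / (INR m + 1).
Proof.
  intros Hn; destruct (proj2 HPhi m) as [N [HN Hafp]].
  eapply Rle_trans; [apply (picard_step_antitone N); lia | exact Hafp].
Qed.

Lemma modulus_pair (s : nat -> nat) (c : nat) :
  nondecreasing s ->
  exists i M, (s i <= s (gamma c))%nat /\ (s (S i) <= M)%nat /\
              d (p (s i)) (p M) <= 1 / (INR c + 1).
Proof.
  intros Hs.
  destruct (Hgamma c (fun n => p (s n)) (fun n => picard_in (s n)))
    as [i [j [Hij [Hj Hdist]]]].
  exists i, (s j); repeat split; [apply Hs; lia | apply Hs; lia | exact Hdist].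
Qed.

Lemma picard_metastable (k : nat) (g : nat -> nat) :
  exists N, (N <= Sigma0 Phi k g (gamma (4 * k + 3)%nat))%nat /\
    forall i j, (N <= i <= N + g N)%nat -> (N <= j <= N + g N)%nat ->
      d (p i) (p j) <= 1 / (INR k + 1).
Proof.
  destruct (modulus_pair _ (4 * k + 3) (Sigma0_nondecreasing Phi k g (proj1 HPhi)))
    as [n [M [HN [HM Hdelta]]]].
  set (N := Sigma0 Phi k g n) in *.
  exists N; split; [exact HN|].
  intros i j Hi Hj.
  eapply Rle_trans; [exact (picard_dist_window N M (g N) i j Hi Hj)|].
  apply (window_budget 4 k (gM g N)); [lia | apply le_gM | apply dist_nonneg | exact Hdelta |].
  exact (afp_bound_tail _ _ HM).
Qed.

Lemma picard_metastable_afp (k : nat) (g : nat -> nat) :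
  exists N, (N <= Sigma0t Phi k g (gamma (8 * k + 7)%nat))%nat /\
    forall i j, (N <= i <= N + g N)%nat -> (N <= j <= N + g N)%nat ->
      d (p i) (p j) <= 1 / (INR k + 1) /\ d (p i) (T (p i)) <= 1 / (INR k + 1).
Proof.
  destruct (modulus_pair _ (8 * k + 7) (Sigma0t_nondecreasing Phi k g (proj1 HPhi)))
    as [n [M [HN [HM Hdelta]]]].
  set (N := Sigma0t Phi k g n) in *.
  assert (Hstep : forall m, (m <= Nat.max (2 * k + 1) ((8 * k + 8) * gM g N))%nat ->
                    d (p M) (T (p M)) <= 1 / (INR m + 1)).
  { intros m Hm; apply afp_bound_tail.
    exact (Nat.le_trans _ _ _ (proj1 HPhi _ _ Hm) HM). }
  exists N; split; [exact HN|].
  intros i j Hi Hj; split.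
  - eapply Rle_trans; [exact (picard_dist_window N M (g N) i j Hi Hj)|].
    apply (window_budget 8 k (gM g N)); [lia | apply le_gM | apply dist_nonneg | exact Hdelta |].
    apply Hstep, Nat.le_max_r.
  - eapply Rle_trans; [exact (picard_step_window N M i (proj1 Hi))|].
    apply (step_budget 8 k); [lia | exact Hdelta | apply Hstep, Nat.le_max_l].
Qed.

End PicardIterates.

Theorem theorem7p7 (X : Type) (d : X -> X -> R) (C : X -> Prop)
  (gamma : nat -> nat) (T : X -> X) (x : X) (Phi : nat -> nat)
  (Hd : is_metric d)
  (Hgamma : II_modulus d C gamma)
  (HTC : maps_into C T)
  (HTne : nonexpansive_on d C T)
  (HFix : exists p, C p /\ T p = p)
  (Hx : C x)
  (HPhi : afp_bound d T (picard T x) Phi) :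
  forall (k : nat) (g : nat -> nat),
    (exists N, (N <= Sigma0 Phi k g (gamma (4 * k + 3)%nat))%nat /\
       forall i j, (N <= i <= N + g N)%nat -> (N <= j <= N + g N)%nat ->
         d (picard T x i) (picard T x j) <= 1 / (INR k + 1))
    /\
    (exists N, (N <= Sigma0t Phi k g (gamma (8 * k + 7)%nat))%nat /\
       forall i j, (N <= i <= N + g N)%nat -> (N <= j <= N + g N)%nat ->
         d (picard T x i) (picard T x j) <= 1 / (INR k + 1) /\
         d (picard T x i) (T (picard T x i)) <= 1 / (INR k + 1)).
Proof.
  intros k g; split.
  - exact (picard_metastable X d C T x Hd HTC HTne Hx gamma Phi Hgamma HPhi k g).
  - exact (picard_metastable_afp X d C T x Hd HTC HTne Hx gamma Phi Hgamma HPhi k g).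
Qed.
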